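(* For every sequent $\Gamma\Rightarrow\Delta$: if $\mathsf{Grz_{Seq}}+\mathsf{cut}\vdash\Gamma\Rightarrow\Delta$, then $\Gamma\Rightarrow\Delta$ is provable in $\mathsf{Grz}_\infty+\mathsf{cut}$.
   Context: Formulas are built from $\bot$ and atomic propositions using $\to$ and $\Box$. A sequent is $\Gamma\Rightarrow\Delta$ with $\Gamma,\Delta$ finite multisets of formulas; $\Box\Pi$ denotes the multiset $\{\Box B:B\in\Pi\}$. Common rules: $(\to_L)$ from $\Gamma,B\Rightarrow\Delta$ and $\Gamma\Rightarrow A,\Delta$ infer $\Gamma,A\to B\Rightarrow\Delta$; $(\to_R)$ from $\Gamma,A\Rightarrow B,\Delta$ infer $\Gamma\Rightarrow A\to B,\Delta$; $(\mathsf{refl})$ from $\Gamma,B,\Box B\Rightarrow\Delta$ infer $\Gamma,\Box B\Rightarrow\Delta$; $(\mathsf{cut})$ from $\Gamma\Rightarrow A,\Delta$ and $\Gamma,A\Rightarrow\Delta$ infer $\Gamma\Rightarrow\Delta$. The finite-proof calculus $\mathsf{Grz_{Seq}}+\mathsf{cut}$ has initial sequents $\Gamma,A\Rightarrow A,\Delta$ (any $A$) and $\Gamma,\bot\Rightarrow\Delta$, the rules $(\to_L),(\to_R),(\mathsf{refl}),(\mathsf{cut})$ and $(\Box_{\mathsf{Grz}})$: from $\Box\Pi,\Box(A\to\Box A)\Rightarrow A$ infer $\Gamma,\Box\Pi\Rightarrow\Box A,\Delta$. The calculus $\mathsf{Grz}_\infty+\mathsf{cut}$ has initial sequents $\Gamma,p\Rightarrow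 p,\Delta$ ($p$ atomic) and $\Gamma,\bot\Rightarrow\Delta$, the rules $(\to_L),(\to_R),(\mathsf{refl}),(\mathsf{cut})$ and $(\Box)$: from left premise $\Gamma,\Box\Pi\Rightarrow A,\Delta$ and right premise $\Box\Pi\Rightarrow A$ infer $\Gamma,\Box\Pi\Rightarrow\Box A,\Delta$. Proofs in $\mathsf{Grz}_\infty+\mathsf{cut}$ are $\infty$-proofs: possibly infinite trees of sequents built by these rules, with leaves labelled by initial sequents, in which every infinite branch passes through a right premise of $(\Box)$ infinitely often; a sequent is provable if it labels the root of an $\infty$-proof. *)

From Stdlib Require Import List Permutation.
Import ListNotations.

Inductive form : Type :=
| Bot : form
| Var : nat -> form
| Imp : form -> form -> form
| Box : form -> form.

(* A sequent  Gamma => Delta ; the lists are read as multisets: every rule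
   below only constrains them up to Permutation. *)
Definition sequent : Type := (list form * list form)%type.

Definition boxes (Pi : list form) : list form := map Box Pi.

Inductive GrzSeq_cut : list form -> list form -> Prop :=
| gs_init : forall G D G0 D0 A,
    Permutation G (A :: G0) -> Permutation D (A :: D0) -> GrzSeq_cut G D
| gs_bot : forall G D G0,
    Permutation G (Bot :: G0) -> GrzSeq_cut G D
| gs_impL : forall G D G0 A B,
    Permutation G (Imp A B :: G0) ->
    GrzSeq_cut (B :: G0) D -> GrzSeq_cut G0 (A :: D) -> GrzSeq_cut G D
| gs_impR : forall G D D0 A B,
    Permutation D (Imp A B :: D0) ->
    GrzSeq_cut (A :: G) (B :: D0) -> GrzSeq_cut G D
| gs_refl : forall G D G0 B,
    Permutation G (Box B :: G0) ->
    GrzSeq_cut (B :: Box B :: G0) D -> GrzSeq_cut G D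
| gs_cut : forall G D A,
    GrzSeq_cut G (A :: D) -> GrzSeq_cut (A :: G) D -> GrzSeq_cut G D
| gs_boxGrz : forall G D G0 D0 Pi A,
    Permutation G (G0 ++ boxes Pi) -> Permutation D (Box A :: D0) ->
    GrzSeq_cut (boxes Pi ++ [Box (Imp A (Box A))]) [A] -> GrzSeq_cut G D.

Inductive rkind : Type := RAx | RBot | RImpL | RImpR | RRefl | RCut | RBox.

(* [step r s ps] : the list of premises [ps] (in order) and conclusion [s]
   form an instance of rule [r].  For RBox, premise 0 is the left premise
   and premise 1 is the right premise. *)
Definition step (r : rkind) (s : sequent) (ps : list sequent) : Prop :=
  let (G, D) := s in
  match r with
  | RAx => ps = [] /\ exists p G0 D0,
      Permutation G (Var p :: G0) /\ Permutation D (Var p :: D0)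
  | RBot => ps = [] /\ exists G0, Permutation G (Bot :: G0)
  | RImpL => exists A B G0, Permutation G (Imp A B :: G0) /\
      ps = [(B :: G0, D); (G0, A :: D)]
  | RImpR => exists A B D0, Permutation D (Imp A B :: D0) /\
      ps = [(A :: G, B :: D0)]
  | RRefl => exists B G0, Permutation G (Box B :: G0) /\
      ps = [(B :: Box B :: G0, D)]
  | RCut => exists A, ps = [(G, A :: D); (A :: G, D)]
  | RBox => exists G0 D0 Pi A,
      Permutation G (G0 ++ boxes Pi) /\ Permutation D (Box A :: D0) /\
      ps = [(G, A :: D0); (boxes Pi, [A])]
  end.

(* A (possibly infinite) tree of sequents: nodes are addressed by lists of
   child indices (address of child i of node p is i :: p); each node carries
   its sequent and the rule applied there. *)
Definition ptree : Type := list nat -> option (sequent * rkind).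

Definition locally_correct (T : ptree) : Prop :=
  (forall p s r, T p = Some (s, r) ->
     exists ps, step r s ps /\
       forall i, (i < length ps -> exists r', T (i :: p) = Some (nth i ps ([], []), r'))
              /\ (length ps <= i -> T (i :: p) = None))
  /\ (forall p i, T p = None -> T (i :: p) = None).

Fixpoint addr (f : nat -> nat) (n : nat) : list nat :=
  match n with
  | 0 => []
  | S m => f m :: addr f m
  end.

Definition infinite_branch (T : ptree) (f : nat -> nat) : Prop :=
  forall n, T (addr f n) <> None.

Definition box_right_step (T : ptree) (f : nat -> nat) (n : nat) : Prop :=
  f n = 1 /\ exists s, T (addr f n) = Some (s, RBox).

Definition progressing (T : ptree) : Prop :=
  forall f, infinite_branch T f ->
    forall N, exists n, N <= n /\ box_right_step T f n.

Definition inf_proof (T : ptree) : Prop := locally_correct T /\ progressing T.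

Definition GrzInf_cut (G D : list form) : Prop :=
  exists T r, inf_proof T /\ T [] = Some ((G, D), r).

(* A derivation in Grz_Seq + cut is translated rule by rule, by induction, into
   an ∞-proof of every weakening of its end sequent.  All rules except (□_Grz)
   are rules of Grz_∞ + cut, and initial sequents A ⇒ A with A compound are
   expanded by induction on A.  For (□_Grz), with premise □Π, □(A → □A) ⇒ A,
   it suffices to prove Γ, □Π ⇒ A, Δ and □Π ⇒ A, which is done by a cyclic
   derivation: cut on □(A → □A), whose right premise is a weakening of the
   (□_Grz) premise and whose left premise Γ, □Π ⇒ □(A → □A), A, Δ follows by
   (□) from □Π ⇒ A → □A, then by (→R) and (□) from □Π ⇒ A again.  The cycle
   runs through a right premise of (□), so its unfolding, with ∞-proofs of
   the remaining leaves grafted on, is an ∞-proof. *)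
From Stdlib Require Import List Permutation Wf_nat Lia.
From Stdlib Require Import ClassicalEpsilon.
Import ListNotations.

Definition inf_provable (q : sequent) : Prop := GrzInf_cut (fst q) (snd q).

Definition empty_tree : ptree := fun _ => None.

Lemma empty_tree_inf_proof : inf_proof empty_tree.
Proof.
  split; [split|].
  - discriminate.
  - reflexivity.
  - intros f Hinf. exfalso. exact (Hinf 0 eq_refl).
Qed.

(* Junk value: the empty tree when [q] has no ∞-proof. *)
Definition proof_of (q : sequent) : ptree :=
  epsilon (inhabits empty_tree)
    (fun T => inf_proof T /\ (inf_provable q -> exists r, T [] = Some (q, r))).

Lemma proof_of_spec q :
  inf_proof (proof_of q) /\ (inf_provable q -> exists r, proof_of q [] = Some (q, r)).
Proof.
  unfold proof_of. apply epsilon_spec.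
  destruct (classic (inf_provable q)) as [[T [r [HT HT0]]]|Hq].
  - exists T. split; [exact HT|]. exists r. rewrite HT0. now destruct q.
  - exists empty_tree. split; [exact empty_tree_inf_proof | tauto].
Qed.

Lemma proof_of_inf_proof q : inf_proof (proof_of q).
Proof. apply proof_of_spec. Qed.

Lemma proof_of_root q : inf_provable q -> exists r, proof_of q [] = Some (q, r).
Proof. apply proof_of_spec. Qed.

Lemma measure_infinitely_often (P : nat -> Prop) (d : nat -> nat) :
  (forall n, P n \/ d (S n) < d n) -> forall N, exists n, N <= n /\ P n.
Proof.
  intros Hd N. remember (d N) as k eqn:Hk. revert N Hk.
  induction k as [k IH] using lt_wf_ind; intros N Hk.
  destruct (Hd N) as [HP|Hlt]; [now exists N|].
  destruct (IH (d (S N)) ltac:(lia) (S N) eq_refl) as [n [HNn HP]].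
  exists n. split; [lia | exact HP].
Qed.

Section CyclicDerivation.

Variable St : Type.
Variable concl : St -> sequent.
Variable rule : St -> rkind.
Variable prem : St -> list (St + sequent).

Definition prem_sequent (y : St + sequent) : sequent :=
  match y with inl s => concl s | inr q => q end.

Hypothesis prem_step : forall s, step (rule s) (concl s) (map prem_sequent (prem s)).
Hypothesis leaves_provable : forall s q, In (inr q) (prem s) -> inf_provable q.
Hypothesis cycles_progress : forall (st : nat -> St) (f : nat -> nat),
  (forall n, nth_error (prem (st n)) (f n) = Some (inl (st (S n)))) ->
  forall N, exists n, N <= n /\ f n = 1 /\ rule (st n) = RBox.

(* [Leaf q p] is the node at address [p] of [proof_of q]; [Dead] lies outside the tree. *)
Inductive gnode := Top (s : St) | Leaf (q : sequent) (p : list nat) | Dead.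

Definition gnext (x : gnode) (i : nat) : gnode :=
  match x with
  | Top s =>
      match nth_error (prem s) i with
      | Some (inl s') => Top s'
      | Some (inr q) => Leaf q []
      | None => Dead
      end
  | Leaf q p => Leaf q (i :: p)
  | Dead => Dead
  end.

Fixpoint gfollow (x : gnode) (p : list nat) : gnode :=
  match p with [] => x | i :: p' => gnext (gfollow x p') i end.

Definition glabel (x : gnode) : option (sequent * rkind) :=
  match x with
  | Top s => Some (concl s, rule s)
  | Leaf q p => proof_of q p
  | Dead => None
  end.

Definition unfolding (s0 : St) : ptree := fun p => glabel (gfollow (Top s0) p).

Lemma unfolding_locally_correct s0 : locally_correct (unfolding s0).
Proof.
  unfold unfolding. split.
  - intros p q r. simpl.
    destruct (gfollow (Top s0) p) as [s|q' p'|]; simpl; [|intros Hp|discriminate].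
    + intros [= <- <-]. exists (map prem_sequent (prem s)). split; [apply prem_step|].
      intros i. rewrite length_map. split; intros Hi.
      * destruct (nth_error (prem s) i) as [y|] eqn:Ey;
          [|apply nth_error_None in Ey; lia].
        rewrite (nth_error_nth _ _ _ (map_nth_error prem_sequent _ _ Ey)).
        destruct y as [s'|q']; simpl; [now eexists|].
        apply proof_of_root, (leaves_provable s), (nth_error_In _ _ Ey).
      * apply nth_error_None in Hi. now rewrite Hi.
    + destruct (proof_of_inf_proof q') as [[Hcorrect _] _]. exact (Hcorrect p' q r Hp).
  - intros p i. simpl. destruct (gfollow (Top s0) p) as [s|q p'|]; simpl; try easy.
    apply (proof_of_inf_proof q).
Qed.

Lemma gfollow_shift x f m : forall n,
  gfollow x (addr f (n + m)) = gfollow (gfollow x (addr f m)) (addr (fun j => f (j + m)) n).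
Proof. induction n as [|n IH]; simpl; [reflexivity | now rewrite IH]. Qed.

Lemma gfollow_Leaf q p f : forall n, gfollow (Leaf q p) (addr f n) = Leaf q (addr f n ++ p).
Proof. induction n as [|n IH]; simpl; [reflexivity | now rewrite IH]. Qed.

Lemma leaf_entry s0 f : forall m q p, gfollow (Top s0) (addr f m) = Leaf q p ->
  exists m' q', gfollow (Top s0) (addr f m') = Leaf q' [].
Proof.
  induction m as [|m IH]; intros q p; simpl; [discriminate|].
  destruct (gfollow (Top s0) (addr f m)) as [s|q' p'|] eqn:E; simpl; [|eauto|discriminate].
  destruct (nth_error (prem s) (f m)) as [[s'|q']|] eqn:En; try discriminate.
  intros _. exists (S m), q'. simpl. rewrite E. simpl. now rewrite En.
Qed.

Lemma unfolding_progressing s0 : progressing (unfolding s0).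
Proof.
  intros f Hinf N. unfold infinite_branch, box_right_step, unfolding in *.
  destruct (classic (exists m q p, gfollow (Top s0) (addr f m) = Leaf q p))
    as [[m [q [p Hm]]]|Htop].
  - destruct (leaf_entry s0 f m q p Hm) as [m' [q' Hm']].
    destruct (proof_of_inf_proof q') as [_ Hprog].
    assert (Hshift : forall n, gfollow (Top s0) (addr f (n + m')) =
                              Leaf q' (addr (fun j => f (j + m')) n)).
    { intros n. rewrite gfollow_shift, Hm', gfollow_Leaf. now rewrite app_nil_r. }
    destruct (Hprog (fun j => f (j + m'))) with (N := N) as [n [HNn [Hfn [q'' Hq'']]]].
    { intros n. specialize (Hinf (n + m')). now rewrite Hshift in Hinf. }
    exists (n + m'). split; [lia|]. split; [exact Hfn|].
    exists q''. now rewrite Hshift.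
  - set (st n := match gfollow (Top s0) (addr f n) with Top s => s | _ => s0 end).
    assert (Hst : forall n, gfollow (Top s0) (addr f n) = Top (st n)).
    { intros n. specialize (Hinf n). subst st. simpl.
      destruct (gfollow (Top s0) (addr f n)) as [s|q p|] eqn:E; [reflexivity| |easy].
      exfalso. eauto. }
    destruct (cycles_progress st f) with (N := N) as [n [HNn [Hfn Hr]]].
    { intros n. pose proof (Hst (S n)) as H. simpl in H. rewrite Hst in H. simpl in H.
      destruct (nth_error (prem (st n)) (f n)) as [[s'|q]|]; congruence. }
    exists n. split; [exact HNn|]. split; [exact Hfn|].
    exists (concl (st n)). now rewrite Hst, <- Hr.
Qed.

Lemma cyclic_derivation_inf_provable s : inf_provable (concl s).
Proof.
  exists (unfolding s), (rule s). split.
  - split; [apply unfolding_locally_correct | apply unfolding_progressing].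
  - unfold unfolding. simpl. now destruct (concl s).
Qed.

End CyclicDerivation.

Lemma GrzInf_cut_step r G D ps :
  step r (G, D) ps -> Forall inf_provable ps -> GrzInf_cut G D.
Proof.
  intros Hst Hps.
  refine (cyclic_derivation_inf_provable unit (fun _ => (G, D)) (fun _ => r)
            (fun _ => map inr ps) _ _ _ tt).
  - intros _. now rewrite map_map, map_id.
  - intros _ q Hq. apply in_map_iff in Hq as [q' [[= <-] Hq']].
    now apply (proj1 (Forall_forall _ _) Hps).
  - intros st f Hch. specialize (Hch 0). rewrite nth_error_map in Hch.
    now destruct (nth_error ps (f 0)).
Qed.

Ltac split_premises :=
  repeat apply Forall_cons; try apply Forall_nil; unfold inf_provable; simpl.

Lemma GrzInf_cut_init A : forall G D G0 D0,
  Permutation G (A :: G0) -> Permutation D (A :: D0) -> GrzInf_cut G D.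
Proof.
  induction A as [|p|A1 IH1 A2 IH2|A IH]; intros G D G0 D0 HG HD.
  - apply (GrzInf_cut_step RBot G D []); [now split; [|exists G0] | constructor].
  - apply (GrzInf_cut_step RAx G D []); [now split; [|exists p, G0, D0] | constructor].
  - apply (GrzInf_cut_step RImpR G D [(A1 :: G, A2 :: D0)]);
      [now exists A1, A2, D0 | split_premises].
    apply (GrzInf_cut_step RImpL _ _ [(A2 :: A1 :: G0, A2 :: D0); (A1 :: G0, A1 :: A2 :: D0)]).
    + exists A1, A2, (A1 :: G0). split; [|reflexivity].
      rewrite HG. apply perm_swap.
    + split_premises; [apply (IH2 _ _ (A1 :: G0) D0) | apply (IH1 _ _ G0 (A2 :: D0))];
        reflexivity.
  - apply (GrzInf_cut_step RBox G D [(G, A :: D0); ([Box A], [A])]).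
    + exists G0, D0, [A], A. repeat split; [|exact HD].
      rewrite HG. apply Permutation_cons_append.
    + split_premises.
      * apply (GrzInf_cut_step RRefl _ _ [(A :: Box A :: G0, A :: D0)]);
          [now exists A, G0 | split_premises].
        apply (IH _ _ (Box A :: G0) D0); reflexivity.
      * apply (GrzInf_cut_step RRefl _ _ [([A; Box A], [A])]);
          [now exists A, [] | split_premises].
        apply (IH _ _ [Box A] []); reflexivity.
Qed.

(* Weakening and exchange are built in because the cyclic derivation for (□_Grz)
   needs the premise of (□_Grz) in an arbitrary context. *)
Definition GrzInf_cut_wk (G D : list form) : Prop :=
  forall G' D' Gx Dx, Permutation G' (G ++ Gx) -> Permutation D' (D ++ Dx) -> GrzInf_cut G' D'.

Lemma GrzInf_cut_wk_init G D G0 D0 A :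
  Permutation G (A :: G0) -> Permutation D (A :: D0) -> GrzInf_cut_wk G D.
Proof.
  intros HG HD G' D' Gx Dx HG' HD'.
  apply (GrzInf_cut_init A G' D' (G0 ++ Gx) (D0 ++ Dx)); [rewrite HG', HG | rewrite HD', HD];
    reflexivity.
Qed.

Lemma GrzInf_cut_wk_bot G D G0 : Permutation G (Bot :: G0) -> GrzInf_cut_wk G D.
Proof.
  intros HG G' D' Gx Dx HG' _.
  apply (GrzInf_cut_step RBot G' D' []); [|constructor].
  split; [reflexivity|]. exists (G0 ++ Gx). now rewrite HG', HG.
Qed.

Lemma GrzInf_cut_wk_impL G D G0 A B : Permutation G (Imp A B :: G0) ->
  GrzInf_cut_wk (B :: G0) D -> GrzInf_cut_wk G0 (A :: D) -> GrzInf_cut_wk G D.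
Proof.
  intros HG IH1 IH2 G' D' Gx Dx HG' HD'.
  apply (GrzInf_cut_step RImpL G' D' [(B :: G0 ++ Gx, D'); (G0 ++ Gx, A :: D')]).
  - exists A, B, (G0 ++ Gx). split; [now rewrite HG', HG | reflexivity].
  - split_premises; [apply (IH1 _ _ Gx Dx) | apply (IH2 _ _ Gx Dx)]; now rewrite ?HD'.
Qed.

Lemma GrzInf_cut_wk_impR G D D0 A B : Permutation D (Imp A B :: D0) ->
  GrzInf_cut_wk (A :: G) (B :: D0) -> GrzInf_cut_wk G D.
Proof.
  intros HD IH G' D' Gx Dx HG' HD'.
  apply (GrzInf_cut_step RImpR G' D' [(A :: G', B :: D0 ++ Dx)]).
  - exists A, B, (D0 ++ Dx). split; [now rewrite HD', HD | reflexivity].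
  - split_premises. apply (IH _ _ Gx Dx); now rewrite ?HG'.
Qed.

Lemma GrzInf_cut_wk_refl G D G0 B : Permutation G (Box B :: G0) ->
  GrzInf_cut_wk (B :: Box B :: G0) D -> GrzInf_cut_wk G D.
Proof.
  intros HG IH G' D' Gx Dx HG' HD'.
  apply (GrzInf_cut_step RRefl G' D' [(B :: Box B :: G0 ++ Gx, D')]).
  - exists B, (G0 ++ Gx). split; [now rewrite HG', HG | reflexivity].
  - split_premises. now apply (IH _ _ Gx Dx).
Qed.

Lemma GrzInf_cut_wk_cut G D A :
  GrzInf_cut_wk G (A :: D) -> GrzInf_cut_wk (A :: G) D -> GrzInf_cut_wk G D.
Proof.
  intros IH1 IH2 G' D' Gx Dx HG' HD'.
  apply (GrzInf_cut_step RCut G' D' [(G', A :: D'); (A :: G', D')]); [now exists A|].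
  split_premises; [apply (IH1 _ _ Gx Dx) | apply (IH2 _ _ Gx Dx)]; now rewrite ?HG', ?HD'.
Qed.

Section GrzCycle.

Variables (Pi : list form) (A : form) (Gam Gam0 Del : list form).
Hypothesis Gam_boxes : Permutation Gam (Gam0 ++ boxes Pi).
Hypothesis grz_premise : GrzInf_cut_wk (boxes Pi ++ [Box (Imp A (Box A))]) [A].

(* The states for b = true prove the goal Γ, □Π ⇒ A, Δ; those for b = false
   prove □Π ⇒ A, the target of the back edge. *)
Inductive grz_state := GCut (b : bool) | GBoxImp (b : bool) | GImp | GBoxA.

Let ctxG (b : bool) := if b then Gam else boxes Pi.
Let ctxD (b : bool) := if b then Del else [].

Definition grz_concl (s : grz_state) : sequent :=
  match s with
  | GCut b => (ctxG b, A :: ctxD b)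
  | GBoxImp b => (ctxG b, Box (Imp A (Box A)) :: A :: ctxD b)
  | GImp => (boxes Pi, [Imp A (Box A)])
  | GBoxA => (A :: boxes Pi, [Box A])
  end.

Definition grz_rule (s : grz_state) : rkind :=
  match s with GCut _ => RCut | GBoxImp _ => RBox | GImp => RImpR | GBoxA => RBox end.

Definition grz_prem (s : grz_state) : list (grz_state + sequent) :=
  match s with
  | GCut b => [inl (GBoxImp b); inr (Box (Imp A (Box A)) :: ctxG b, A :: ctxD b)]
  | GBoxImp b => [inr (ctxG b, Imp A (Box A) :: A :: ctxD b); inl GImp]
  | GImp => [inl GBoxA]
  | GBoxA => [inr (A :: boxes Pi, [A]); inl (GCut false)]
  end.

Definition dist_to_GBoxA (s : grz_state) : nat :=
  match s with GCut _ => 3 | GBoxImp _ => 2 | GImp => 1 | GBoxA => 0 end.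

Lemma grz_prem_step s :
  step (grz_rule s) (grz_concl s) (map (prem_sequent _ grz_concl) (grz_prem s)).
Proof.
  destruct s as [b|b| |]; simpl.
  - now eexists.
  - exists (if b then Gam0 else []), (A :: ctxD b), Pi, (Imp A (Box A)).
    repeat split; [destruct b; [exact Gam_boxes | reflexivity] | reflexivity].
  - now exists A, (Box A), [].
  - now exists [A], [], Pi, A.
Qed.

Lemma grz_leaves_provable s q : In (inr q) (grz_prem s) -> inf_provable q.
Proof.
  intros Hq. destruct s as [b|b| |]; simpl in Hq;
    repeat match type of Hq with _ \/ _ => destruct Hq as [Hq|Hq] end; try easy;
    injection Hq as <-; unfold inf_provable; simpl.
  - apply (grz_premise _ _ (if b then Gam0 else []) (ctxD b)); [|reflexivity].
    rewrite <- app_assoc. simpl. destruct b; simpl.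
    + rewrite Gam_boxes. apply Permutation_cons_app, Permutation_app_comm.
    + apply Permutation_cons_append.
  - apply (GrzInf_cut_step RImpR _ _ [(A :: ctxG b, Box A :: A :: ctxD b)]);
      [now exists A, (Box A), (A :: ctxD b) | split_premises].
    apply (GrzInf_cut_init A _ _ (ctxG b) (Box A :: ctxD b)); [reflexivity | apply perm_swap].
  - apply (GrzInf_cut_init A _ _ (boxes Pi) []); reflexivity.
Qed.

Lemma grz_cycles_progress (st : nat -> grz_state) (f : nat -> nat) :
  (forall n, nth_error (grz_prem (st n)) (f n) = Some (inl (st (S n)))) ->
  forall N, exists n, N <= n /\ f n = 1 /\ grz_rule (st n) = RBox.
Proof.
  intros Hch N.
  assert (Hdist : forall n, st n = GBoxA \/ dist_to_GBoxA (st (S n)) < dist_to_GBoxA (st n)).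
  { intros n. specialize (Hch n).
    destruct (st n) as [b|b| |]; [| | |now left]; right;
      destruct (f n) as [|[|[|i]]]; simpl in Hch; try discriminate;
      injection Hch as <-; simpl; lia. }
  destruct (measure_infinitely_often _ _ Hdist N) as [n [HNn Hn]].
  exists n. split; [exact HNn|]. specialize (Hch n). rewrite Hn in Hch |- *.
  split; [|reflexivity]. destruct (f n) as [|[|[|i]]]; simpl in Hch; easy.
Qed.

Lemma grz_cycle_root : GrzInf_cut Gam (A :: Del).
Proof.
  exact (cyclic_derivation_inf_provable _ grz_concl grz_rule grz_prem grz_prem_step
           grz_leaves_provable grz_cycles_progress (GCut true)).
Qed.

End GrzCycle.

Lemma GrzInf_cut_wk_boxGrz G D G0 D0 Pi A :
  Permutation G (G0 ++ boxes Pi) -> Permutation D (Box A :: D0) ->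
  GrzInf_cut_wk (boxes Pi ++ [Box (Imp A (Box A))]) [A] -> GrzInf_cut_wk G D.
Proof.
  intros HG HD IH G' D' Gx Dx HG' HD'.
  assert (HGx : Permutation G' ((G0 ++ Gx) ++ boxes Pi)).
  { rewrite HG', HG, <- !app_assoc. apply Permutation_app_head, Permutation_app_comm. }
  apply (GrzInf_cut_step RBox G' D' [(G', A :: D0 ++ Dx); (boxes Pi, [A])]).
  - exists (G0 ++ Gx), (D0 ++ Dx), Pi, A. repeat split; [exact HGx | now rewrite HD', HD].
  - split_premises; [exact (grz_cycle_root Pi A G' _ _ HGx IH) |].
    exact (grz_cycle_root Pi A (boxes Pi) [] [] (Permutation_refl _) IH).
Qed.

Lemma GrzSeq_cut_GrzInf_cut_wk G D : GrzSeq_cut G D -> GrzInf_cut_wk G D.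
Proof.
  induction 1; eauto using GrzInf_cut_wk_init, GrzInf_cut_wk_bot, GrzInf_cut_wk_impL,
    GrzInf_cut_wk_impR, GrzInf_cut_wk_refl, GrzInf_cut_wk_cut, GrzInf_cut_wk_boxGrz.
Qed.

Theorem theorem3p4 (G D : list form) :
  GrzSeq_cut G D -> GrzInf_cut G D.
Proof.
  intros H. apply (GrzSeq_cut_GrzInf_cut_wk G D H G D [] []); now rewrite app_nil_r.
Qed.
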